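(* Let $N\ge1$ and $0<b_1<\cdots<b_N$. The set $\mathbf{S}$ of continuous functions $g:\mathbb{R}\to\mathbb{R}$ satisfying $g(w)+g(w+b_1)+\cdots+g(w+b_N)=0$ for all $w\in\mathbb{R}$ is an infinite-dimensional real vector space. Consequently, for any reals $1<a_1<\cdots<a_N$, the space of continuous functions $f:(0,\infty)\to\mathbb{R}$ satisfying $f(x)+f(a_1x)+\cdots+f(a_Nx)=0$ for all $x\in(0,\infty)$ is an infinite-dimensional real vector space. *)

From Stdlib Require Import Reals.
Open Scope R_scope.

Fixpoint sum_1N (N : nat) (F : nat -> R) : R :=
  match N with
  | O => 0
  | S n => sum_1N n F + F (S n)
  end.

Fixpoint sum_lt (n : nat) (F : nat -> R) : R :=
  match n with
  | O => 0
  | S m => sum_lt m F + F m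
  end.

Definition solS (N : nat) (b : nat -> R) (g : R -> R) : Prop :=
  continuity g /\ forall w : R, g w + sum_1N N (fun i => g (w + b i)) = 0.

(* Continuous f on (0,oo) with f(x) + f(a_1 x) + ... + f(a_N x) = 0 for x > 0.
   Functions are represented as R -> R; only values on (0,oo) matter. *)
Definition solT (N : nat) (a : nat -> R) (f : R -> R) : Prop :=
  (forall x, 0 < x -> continuity_pt f x) /\
  forall x : R, 0 < x -> f x + sum_1N N (fun i => f (a i * x)) = 0.

Definition is_subspace (P : (R -> R) -> Prop) : Prop :=
  P (fun _ => 0) /\
  (forall f g, P f -> P g -> P (fun x => f x + g x)) /\
  (forall (c : R) f, P f -> P (fun x => c * f x)).

Definition lin_indep_on (D : R -> Prop) (n : nat) (F : nat -> R -> R) : Prop :=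
  forall c : nat -> R,
    (forall x, D x -> sum_lt n (fun i => c i * F i x) = 0) ->
    forall i, (i < n)%nat -> c i = 0.

Definition infinite_dim_on (D : R -> Prop) (P : (R -> R) -> Prop) : Prop :=
  forall n : nat, exists F : nat -> R -> R,
    (forall i, (i < n)%nat -> P (F i)) /\ lin_indep_on D n F.

(* The heart of the proof is
   an extension result: every continuous "seed" phi vanishing outside (0, b_1)
   extends to a continuous solution g on R that agrees with phi on [0, b_N].
   Reading the equation as  g(w) = -(g(w+b_1) + ... + g(w+b_N))  determines g
   to the left of 0, and reading it as  g(w) = -g(w-b_N) - sum_{i<N} g(w-b_N+b_i)
   determines g to the right of b_N; each application of this extension operator
   enlarges the window [0, b_N] on which the approximations have stabilised by a
   fixed step s > 0, and g is the pointwise limit (attained after finitely many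
   steps).  Seeding with m tent functions with disjoint supports inside (0, b_1)
   yields m solutions that are linearly independent (evaluate at the peaks).
   The multiplicative case follows by the substitution x = exp w, i.e. by
   composing additive solutions for b_i = ln a_i with ln. *)

From Stdlib Require Import Reals Lra Lia ZArith.
Open Scope R_scope.

Lemma sum_1N_ext N F G :
  (forall i, (1 <= i <= N)%nat -> F i = G i) -> sum_1N N F = sum_1N N G.
Proof.
  induction N as [|N IH]; intros H; simpl; [reflexivity|].
  rewrite IH, H; [reflexivity | lia | intros i Hi; apply H; lia].
Qed.

Lemma sum_1N_plus N F G : sum_1N N (fun i => F i + G i) = sum_1N N F + sum_1N N G.
Proof. induction N as [|N IH]; simpl; [ring|]. rewrite IH; ring. Qed.

Lemma sum_1N_scal N c F : sum_1N N (fun i => c * F i) = c * sum_1N N F.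
Proof. induction N as [|N IH]; simpl; [ring|]. rewrite IH; ring. Qed.

Lemma sum_1N_zero N F : (forall i, (1 <= i <= N)%nat -> F i = 0) -> sum_1N N F = 0.
Proof.
  intros H. rewrite (sum_1N_ext N F (fun _ => 0 * 0)) by (intros i Hi; rewrite H; auto; ring).
  rewrite sum_1N_scal; ring.
Qed.

Lemma sum_1N_continuity_pt N (F : nat -> R -> R) x :
  (forall i, continuity_pt (F i) x) -> continuity_pt (fun t => sum_1N N (fun i => F i t)) x.
Proof.
  intros H. induction N as [|N IH]; simpl.
  - apply continuity_pt_const; intros u v; reflexivity.
  - exact (continuity_pt_plus (fun t => sum_1N N (fun i => F i t)) (F (S N)) x IH (H _)).
Qed.

Lemma sum_lt_single m j F :
  (j < m)%nat -> (forall i, (i < m)%nat -> i <> j -> F i = 0) -> sum_lt m F = F j.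
Proof.
  induction m as [|m IH]; intros Hj H; [lia|]. simpl.
  destruct (Nat.eq_dec j m) as [->|Hjm].
  - assert (Hzero : forall k, (k <= m)%nat -> sum_lt k F = 0).
    { induction k as [|k IHk]; intros Hk; simpl; [reflexivity|].
      rewrite IHk, H by lia; ring. }
    rewrite Hzero by lia; ring.
  - rewrite (H m) by lia. rewrite IH; [ring | lia | intros i Hi Hij; apply H; lia].
Qed.

Lemma lin_indep_of_peaks (D : R -> Prop) m (F : nat -> R -> R) (x : nat -> R) :
  (forall j, (j < m)%nat -> D (x j)) ->
  (forall i j, (i < m)%nat -> (j < m)%nat -> i <> j -> F i (x j) = 0) ->
  (forall j, (j < m)%nat -> F j (x j) <> 0) ->
  lin_indep_on D m F.
Proof.
  intros HD Hoff Hdiag c Hc j Hj.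
  specialize (Hc (x j) (HD j Hj)).
  rewrite (sum_lt_single m j) in Hc by (auto; intros i Hi Hij; rewrite Hoff by auto; ring).
  apply Rmult_integral in Hc as [Hc|Hc]; [exact Hc | contradiction (Hdiag j Hj)].
Qed.

(* Continuity via non-expansiveness: this covers translations, the clamps
   t |-> min(t,c), t |-> max(t,c) and the tent functions used below. *)

Definition nonexpansive (f : R -> R) : Prop :=
  forall x y, Rabs (f x - f y) <= Rabs (x - y).

Lemma nonexpansive_continuity f : nonexpansive f -> continuity f.
Proof.
  intros Hf x eps Heps. exists eps. split; [exact Heps|].
  intros y [_ Hy]. simpl in *. unfold R_dist in *. exact (Rle_lt_trans _ _ _ (Hf y x) Hy).
Qed.

Lemma nonexpansive_comp f g : nonexpansive f -> nonexpansive g -> nonexpansive (fun t => f (g t)).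
Proof. intros Hf Hg x y. exact (Rle_trans _ _ _ (Hf (g x) (g y)) (Hg x y)). Qed.

Lemma nonexpansive_shift c : nonexpansive (fun t => t + c).
Proof. intros x y. replace (x + c - (y + c)) with (x - y) by ring. apply Rle_refl. Qed.

Lemma nonexpansive_Rmin c : nonexpansive (fun t => Rmin t c).
Proof.
  intros x y. unfold Rmin. destruct (Rle_dec x c), (Rle_dec y c);
    unfold Rabs; repeat destruct (Rcase_abs _); lra.
Qed.

Lemma nonexpansive_Rmax c : nonexpansive (fun t => Rmax t c).
Proof.
  intros x y. unfold Rmax. destruct (Rle_dec x c), (Rle_dec y c);
    unfold Rabs; repeat destruct (Rcase_abs _); lra.
Qed.

Lemma continuity_translate (h : R -> R) c : continuity h -> continuity (fun u => h (u + c)).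
Proof.
  intros Hh x. apply (continuity_pt_comp (fun u => u + c) h); [|apply Hh].
  apply nonexpansive_continuity, nonexpansive_shift.
Qed.

Definition tent (r c t : R) : R := Rmax (r - Rabs (t - c)) 0.

Lemma tent_continuity r c : continuity (tent r c).
Proof.
  apply nonexpansive_continuity, (nonexpansive_comp (fun u => Rmax u 0)); [apply nonexpansive_Rmax|].
  intros x y. pose proof (Rabs_triang_inv (x - c) (y - c)). pose proof (Rabs_triang_inv (y - c) (x - c)).
  replace (x - c - (y - c)) with (x - y) in * by ring. replace (y - c - (x - c)) with (- (x - y)) in * by ring.
  rewrite Rabs_Ropp in *. unfold Rabs at 1; destruct (Rcase_abs _); lra.
Qed.

Lemma tent_outside r c t : r <= Rabs (t - c) -> tent r c t = 0.
Proof. intros H. unfold tent. apply Rmax_right. lra. Qed.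

Lemma tent_peak r c : 0 <= r -> tent r c c = r.
Proof.
  intros Hr. unfold tent. replace (c - c) with 0 by ring.
  rewrite Rabs_R0, Rminus_0_r. apply Rmax_left. exact Hr.
Qed.

Lemma solS_subspace N b : is_subspace (solS N b).
Proof.
  split; [|split].
  - split; [intros x; apply continuity_pt_const; intros u v; reflexivity|].
    intros w. rewrite sum_1N_zero by reflexivity. ring.
  - intros f g [Cf Ef] [Cg Eg]. split; [intros x; apply (continuity_pt_plus f g); auto|].
    intros w. rewrite (sum_1N_plus N (fun i => f (w + b i)) (fun i => g (w + b i))).
    specialize (Ef w); specialize (Eg w); lra.
  - intros c f [Cf Ef]. split.
    + intros x. apply (continuity_pt_mult (fun _ => c) f); [|apply Cf].
      apply continuity_pt_const; intros u v; reflexivity.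
    + intros w. rewrite (sum_1N_scal N c (fun i => f (w + b i))).
      rewrite <- Rmult_plus_distr_l, Ef; ring.
Qed.

Lemma solT_subspace N a : is_subspace (solT N a).
Proof.
  split; [|split].
  - split; [intros x _; apply continuity_pt_const; intros u v; reflexivity|].
    intros x _. rewrite sum_1N_zero by reflexivity. ring.
  - intros f g [Cf Ef] [Cg Eg]. split; [intros x Hx; apply (continuity_pt_plus f g); auto|].
    intros x Hx. rewrite (sum_1N_plus N (fun i => f (a i * x)) (fun i => g (a i * x))).
    specialize (Ef x Hx); specialize (Eg x Hx); lra.
  - intros c f [Cf Ef]. split.
    + intros x Hx. apply (continuity_pt_mult (fun _ => c) f); [|apply Cf, Hx].
      apply continuity_pt_const; intros u v; reflexivity.
    + intros x Hx. rewrite (sum_1N_scal N c (fun i => f (a i * x))).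
      rewrite <- Rmult_plus_distr_l, Ef by exact Hx; ring.
Qed.

Lemma stepwise_increasing N (b : nat -> R) :
  (forall i, (1 <= i < N)%nat -> b i < b (S i)) ->
  forall i j, (1 <= i)%nat -> (i < j)%nat -> (j <= N)%nat -> b i < b j.
Proof.
  intros Hinc i j Hi Hij. induction Hij as [|j Hij IH]; intros Hj.
  - apply Hinc; lia.
  - apply (Rlt_trans _ (b j)); [apply IH; lia | apply Hinc; lia].
Qed.

Section Extension.

Variables (n : nat) (b : nat -> R) (s : R) (phi : R -> R).
Hypothesis s_pos : 0 < s.
Hypothesis s_le_b1 : s <= b 1%nat.
Hypothesis b_range : forall i, (1 <= i <= S n)%nat -> b 1%nat <= b i <= b (S n).
Hypothesis b_gap : forall i, (1 <= i <= n)%nat -> b i + s <= b (S n).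
Hypothesis phi_continuity : continuity phi.
Hypothesis phi_support : forall t, t <= 0 \/ b 1%nat <= t -> phi t = 0.

Lemma b1_le_bN : b 1%nat <= b (S n).
Proof. apply b_range; lia. Qed.

(* The value at u forced by the equation at w = u, given h to the right of u. *)
Definition solve_left (h : R -> R) (u : R) : R :=
  - sum_1N (S n) (fun i => h (u + b i)).

(* The value at u forced by the equation at w = u - b_N, given h to the left of u. *)
Definition solve_right (h : R -> R) (u : R) : R :=
  - h (u - b (S n)) - sum_1N n (fun i => h (u + (b i - b (S n)))).

(* One extension step: phi on [0, b_N], solve_left to the left, solve_right to
   the right.  The clamps make each piece continuous and constant off its range. *)
Definition extend (h : R -> R) (t : R) : R :=
  solve_left h (Rmin t 0) + phi t + solve_right h (Rmax t (b (S n))).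

Fixpoint approx (k : nat) : R -> R :=
  match k with O => phi | S k => extend (approx k) end.

(* The pieces of [extend h] glue together when h vanishes at 0, b_1, ..., b_N. *)
Definition vanishes_at_nodes (h : R -> R) : Prop :=
  h 0 = 0 /\ forall i, (1 <= i <= S n)%nat -> h (b i) = 0.

Lemma solve_left_at_0 h : vanishes_at_nodes h -> solve_left h 0 = 0.
Proof.
  intros [_ Hb]. unfold solve_left. rewrite sum_1N_zero; [ring|].
  intros i Hi. rewrite Rplus_0_l. apply Hb, Hi.
Qed.

Lemma solve_right_at_bN h : vanishes_at_nodes h -> solve_right h (b (S n)) = 0.
Proof.
  intros [H0 Hb]. unfold solve_right. rewrite Rminus_diag, H0, sum_1N_zero; [ring|].
  intros i Hi. replace (b (S n) + (b i - b (S n))) with (b i) by ring. apply Hb; lia.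
Qed.

Lemma extend_mid h t : vanishes_at_nodes h -> 0 <= t <= b (S n) -> extend h t = phi t.
Proof.
  intros Hh Ht. unfold extend. rewrite Rmin_right, Rmax_right by lra.
  rewrite solve_left_at_0, solve_right_at_bN by exact Hh. ring.
Qed.

Lemma extend_left h t : vanishes_at_nodes h -> t <= 0 -> extend h t = solve_left h t.
Proof.
  intros Hh Ht. pose proof b1_le_bN. unfold extend. rewrite Rmin_left, Rmax_right by lra.
  rewrite solve_right_at_bN, phi_support by (auto; lra). ring.
Qed.

Lemma extend_right h t : vanishes_at_nodes h -> b (S n) <= t -> extend h t = solve_right h t.
Proof.
  intros Hh Ht. pose proof b1_le_bN. unfold extend. rewrite Rmin_right, Rmax_left by lra.
  rewrite solve_left_at_0, phi_support by (auto; lra). ring.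
Qed.

Lemma extend_continuity h : continuity h -> continuity (extend h).
Proof.
  intros Hh x. unfold extend.
  assert (Hleft : continuity (solve_left h)).
  { intros u. apply continuity_pt_opp, (sum_1N_continuity_pt _ (fun i u => h (u + b i))).
    intros i. apply continuity_translate, Hh. }
  assert (Hright : continuity (solve_right h)).
  { intros u. unfold solve_right.
    apply (continuity_pt_minus (fun u => - h (u - b (S n)))).
    - apply continuity_pt_opp, (continuity_translate h (- b (S n)) Hh).
    - apply (sum_1N_continuity_pt _ (fun i u => h (u + (b i - b (S n))))).
      intros i. apply continuity_translate, Hh. }
  apply (continuity_pt_plus (fun t => solve_left h (Rmin t 0) + phi t)); [apply continuity_pt_plus|].
  - apply (continuity_pt_comp (fun t => Rmin t 0)); [|apply Hleft].
    apply nonexpansive_continuity, nonexpansive_Rmin.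
  - apply phi_continuity.
  - apply (continuity_pt_comp (fun t => Rmax t (b (S n)))); [|apply Hright].
    apply nonexpansive_continuity, nonexpansive_Rmax.
Qed.

Lemma approx_vanishes_at_nodes k : vanishes_at_nodes (approx k).
Proof.
  pose proof b1_le_bN.
  assert (Hphi : vanishes_at_nodes phi).
  { split; [apply phi_support; lra|]. intros i Hi. apply phi_support. right; apply b_range, Hi. }
  induction k as [|k IH]; [exact Hphi|]. simpl. split.
  - rewrite extend_mid by (auto; lra). apply Hphi.
  - intros i Hi. pose proof (b_range i Hi). rewrite extend_mid by (auto; lra). apply Hphi, Hi.
Qed.

Lemma approx_continuity k : continuity (approx k).
Proof. induction k as [|k IH]; [exact phi_continuity | apply extend_continuity, IH]. Qed.

(* After k steps the approximations have stabilised on [-k s, b_N + k s]. *)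
Definition window (k : nat) (t : R) : Prop :=
  - (INR k * s) <= t <= b (S n) + INR k * s.

Lemma window_mono k m t : (k <= m)%nat -> window k t -> window m t.
Proof. intros Hkm Ht. apply le_INR in Hkm. unfold window in *. nra. Qed.

(* [extend] only looks a distance s beyond the current window: this is where the
   bounds s <= b_1 and b_i + s <= b_N are used. *)
Lemma extend_agree k h1 h2 :
  vanishes_at_nodes h1 -> vanishes_at_nodes h2 -> (forall t, window k t -> h1 t = h2 t) ->
  forall t, window (S k) t -> extend h1 t = extend h2 t.
Proof.
  intros Z1 Z2 Hagree t Ht. unfold window in *. rewrite S_INR in Ht.
  pose proof (pos_INR k). pose proof b1_le_bN.
  destruct (Rle_dec t 0) as [Hl|Hl]; [|destruct (Rle_dec (b (S n)) t) as [Hr|Hr]].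
  - rewrite !extend_left by auto. unfold solve_left. f_equal. apply sum_1N_ext.
    intros i Hi. pose proof (b_range i Hi). apply Hagree. nra.
  - rewrite !extend_right by auto. unfold solve_right. f_equal; [f_equal; apply Hagree; nra|].
    apply sum_1N_ext. intros i Hi. pose proof (b_range i ltac:(lia)). pose proof (b_gap i Hi).
    apply Hagree. nra.
  - rewrite !extend_mid by (auto; lra). reflexivity.
Qed.

Lemma approx_stable_step k t : window k t -> approx (S k) t = approx k t.
Proof.
  revert t. induction k as [|k IH]; intros t Ht.
  - unfold window in Ht. simpl in Ht. simpl. apply extend_mid; [apply (approx_vanishes_at_nodes 0) | lra].
  - exact (extend_agree k _ _ (approx_vanishes_at_nodes (S k)) (approx_vanishes_at_nodes k) IH t Ht).
Qed.

Lemma approx_stable k m t : (k <= m)%nat -> window k t -> approx m t = approx k t.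
Proof.
  intros Hkm Ht. induction Hkm as [|m Hkm IH]; [reflexivity|].
  rewrite approx_stable_step by (apply (window_mono k); auto). exact IH.
Qed.

Definition window_index (t : R) : nat := Z.to_nat (up (Rabs t / s)).

Lemma abs_le_window_index t : Rabs t <= INR (window_index t) * s.
Proof.
  unfold window_index. destruct (archimed (Rabs t / s)) as [Hup _].
  assert (Hq : 0 <= Rabs t / s) by (apply Rmult_le_pos; [apply Rabs_pos | apply Rlt_le, Rinv_0_lt_compat, s_pos]).
  assert (Hz : (0 <= up (Rabs t / s))%Z) by (apply le_IZR; lra).
  rewrite INR_IZR_INZ, Z2Nat.id by exact Hz.
  apply (Rmult_le_reg_r (/ s)); [apply Rinv_0_lt_compat, s_pos|].
  rewrite Rmult_assoc, Rinv_r by lra. unfold Rdiv in Hup. lra.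
Qed.

Lemma window_of_abs k t : Rabs t <= INR k * s -> window k t.
Proof.
  intros H. pose proof b1_le_bN. unfold window.
  unfold Rabs in H; destruct (Rcase_abs t); lra.
Qed.

Definition extension (t : R) : R := approx (window_index t) t.

Lemma extension_approx m t : window m t -> extension t = approx m t.
Proof.
  intros Hm. unfold extension.
  assert (Hidx : window (window_index t) t) by apply window_of_abs, abs_le_window_index.
  destruct (Nat.le_ge_cases m (window_index t)).
  - apply approx_stable; auto.
  - symmetry; apply approx_stable; auto.
Qed.

Lemma extension_seed t : 0 <= t <= b (S n) -> extension t = phi t.
Proof. intros Ht. apply (extension_approx 0). unfold window; simpl; lra. Qed.

Lemma extension_continuity : continuity extension.
Proof.
  intros x. set (m := window_index (Rabs x + 1)).
  apply (continuity_pt_locally_ext (approx m) extension 1 x); [lra| |apply approx_continuity].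
  intros y Hy. symmetry. apply extension_approx, window_of_abs.
  pose proof (abs_le_window_index (Rabs x + 1)) as Hm. fold m in Hm.
  rewrite (Rabs_pos_eq (Rabs x + 1)) in Hm by (pose proof (Rabs_pos x); lra).
  unfold Rdist in Hy. pose proof (Rabs_triang_inv y x). lra.
Qed.

Lemma extension_equation w : extension w + sum_1N (S n) (fun i => extension (w + b i)) = 0.
Proof.
  pose proof b1_le_bN. pose proof (Rabs_pos w).
  set (m := window_index (Rabs w + b (S n))).
  pose proof (abs_le_window_index (Rabs w + b (S n))) as Hm. fold m in Hm.
  rewrite (Rabs_pos_eq (Rabs w + b (S n))) in Hm by lra.
  assert (Hw : window m w) by (apply window_of_abs; lra).
  assert (Hwb : forall i, (1 <= i <= S n)%nat -> window m (w + b i)).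
  { intros i Hi. pose proof (b_range i Hi). apply window_of_abs.
    pose proof (Rabs_triang w (b i)). rewrite (Rabs_pos_eq (b i)) in * by lra. lra. }
  assert (Hnext : forall t, window m t -> window (S m) t) by (intros t; apply window_mono; lia).
  pose proof (approx_vanishes_at_nodes m) as Hz.
  destruct (Rle_dec w 0) as [Hl|Hl].
  - (* w <= 0: the value at w was produced by solve_left *)
    rewrite (extension_approx (S m) w) by auto. simpl approx. rewrite extend_left by auto.
    unfold solve_left. rewrite (sum_1N_ext _ (fun i => extension (w + b i)) (fun i => approx m (w + b i)));
      [ring|].
    intros i Hi. apply extension_approx, Hwb, Hi.
  - (* w > 0: the value at w + b_N was produced by solve_right *)
    simpl sum_1N. rewrite (extension_approx (S m) (w + b (S n))) by (apply Hnext, Hwb; lia).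
    simpl approx. rewrite extend_right by (auto; lra). unfold solve_right.
    replace (w + b (S n) - b (S n)) with w by ring.
    rewrite (sum_1N_ext n (fun i => extension (w + b i)) (fun i => approx m (w + b (S n) + (b i - b (S n))))).
    + rewrite (extension_approx m w) by exact Hw. ring.
    + intros i Hi. replace (w + b (S n) + (b i - b (S n))) with (w + b i) by ring.
      apply extension_approx, Hwb; lia.
Qed.

Lemma extension_solS : solS (S n) b extension.
Proof. split; [exact extension_continuity | exact extension_equation]. Qed.

End Extension.

Lemma stepwise_nondecreasing N (b : nat -> R) :
  (forall i, (1 <= i < N)%nat -> b i < b (S i)) ->
  forall i j, (1 <= i)%nat -> (i <= j)%nat -> (j <= N)%nat -> b i <= b j.
Proof.
  intros Hinc i j Hi Hij Hj. destruct (Nat.eq_dec i j) as [->|Hne]; [apply Rle_refl|].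
  apply Rlt_le, (stepwise_increasing N); auto; lia.
Qed.

Lemma step_size_exists n (b : nat -> R) :
  0 < b 1%nat -> (forall i, (1 <= i < S n)%nat -> b i < b (S i)) ->
  exists s, 0 < s /\ s <= b 1%nat /\ forall i, (1 <= i <= n)%nat -> b i + s <= b (S n).
Proof.
  intros Hb1 Hinc. destruct n as [|n].
  - exists (b 1%nat). repeat split; [exact Hb1 | apply Rle_refl | intros; lia].
  - assert (Hlast : b (S n) < b (S (S n))) by (apply Hinc; lia).
    exists (Rmin (b 1%nat) (b (S (S n)) - b (S n))). repeat split.
    + apply Rmin_pos; lra.
    + apply Rmin_l.
    + intros i Hi. pose proof (Rmin_r (b 1%nat) (b (S (S n)) - b (S n))).
      pose proof (stepwise_nondecreasing _ _ Hinc i (S n) ltac:(lia) ltac:(lia) ltac:(lia)). lra.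
Qed.

Lemma INR_separated i j : i <> j -> 1 <= Rabs (INR i - INR j).
Proof.
  intros Hij. destruct (Nat.lt_gt_cases i j) as [[Hlt|Hlt] _]; [exact Hij| |];
    apply le_INR in Hlt; rewrite S_INR in Hlt; unfold Rabs; destruct (Rcase_abs _); lra.
Qed.

Lemma solS_infinite_dim n (b : nat -> R) :
  0 < b 1%nat -> (forall i, (1 <= i < S n)%nat -> b i < b (S i)) ->
  infinite_dim_on (fun _ => True) (solS (S n) b).
Proof.
  intros Hb1 Hinc m.
  destruct (step_size_exists n b Hb1 Hinc) as (s & Hs & Hsb1 & Hgap).
  assert (Hrange : forall i, (1 <= i <= S n)%nat -> b 1%nat <= b i <= b (S n)).
  { intros i Hi. split; apply (stepwise_nondecreasing (S n)); auto; lia. }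
  pose proof (Hrange (S n) ltac:(lia)) as HbN.
  pose proof (pos_INR m).
  set (r := b 1%nat / (2 * INR m + 2)).
  assert (Hr : 0 < r) by (apply Rdiv_lt_0_compat; lra).
  assert (Hb1r : b 1%nat = r * (2 * INR m + 2)) by (unfold r; field; lra).
  set (peak j := (2 * INR j + 1) * r).
  assert (Hpeak : forall j, (j < m)%nat -> 0 <= peak j <= b (S n) /\
                    forall t, t <= 0 \/ b 1%nat <= t -> r <= Rabs (t - peak j)).
  { intros j Hj. pose proof (pos_INR j).
    assert (Hjm : INR (S j) <= INR m) by (apply le_INR; lia). rewrite S_INR in Hjm.
    split; [unfold peak; nra|]. intros t [Ht|Ht]; unfold peak.
    - rewrite Rabs_left1 by nra. nra.
    - rewrite Rabs_pos_eq by nra. nra. }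
  assert (Hseed : forall j, (j < m)%nat ->
            forall t, t <= 0 \/ b 1%nat <= t -> tent r (peak j) t = 0).
  { intros j Hj t Ht. apply tent_outside, Hpeak; auto. }
  exists (fun j => extension n b s (tent r (peak j))). split.
  - intros j Hj. apply extension_solS; auto using tent_continuity.
  - apply (lin_indep_of_peaks _ m _ peak); [trivial| |].
    + intros i j Hi Hj Hij. rewrite extension_seed by (auto using tent_continuity; apply Hpeak, Hj).
      apply tent_outside. unfold peak.
      replace ((2 * INR j + 1) * r - (2 * INR i + 1) * r) with (2 * r * (INR j - INR i)) by ring.
      rewrite Rabs_mult, (Rabs_pos_eq (2 * r)) by lra.
      pose proof (INR_separated j i (not_eq_sym Hij)). nra.
    + intros j Hj. rewrite extension_seed by (auto using tent_continuity; apply Hpeak, Hj).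
      rewrite tent_peak by lra. lra.
Qed.

Lemma solT_of_solS N (a : nat -> R) (g : R -> R) :
  (forall i, (1 <= i <= N)%nat -> 0 < a i) ->
  solS N (fun i => ln (a i)) g -> solT N a (fun x => g (ln x)).
Proof.
  intros Ha [Hcont Heq]. split.
  - intros x Hx. apply (continuity_pt_comp ln g); [|apply Hcont].
    apply derivable_continuous_pt. exact (exist _ (/ x) (derivable_pt_lim_ln x Hx)).
  - intros x Hx. rewrite <- (Heq (ln x)). f_equal. apply sum_1N_ext.
    intros i Hi. rewrite ln_mult by auto. f_equal; ring.
Qed.

Lemma lin_indep_comp_ln m (F : nat -> R -> R) :
  lin_indep_on (fun _ => True) m F -> lin_indep_on (fun x => 0 < x) m (fun i x => F i (ln x)).
Proof.
  intros Hind c Hc. apply Hind. intros w _.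
  specialize (Hc (exp w) (exp_pos w)). rewrite ln_exp in Hc. exact Hc.
Qed.

Lemma solT_infinite_dim n (a : nat -> R) :
  1 < a 1%nat -> (forall i, (1 <= i < S n)%nat -> a i < a (S i)) ->
  infinite_dim_on (fun x => 0 < x) (solT (S n) a).
Proof.
  intros Ha1 Hinc m.
  assert (Hpos : forall i, (1 <= i <= S n)%nat -> 0 < a i).
  { intros i Hi. pose proof (stepwise_nondecreasing _ _ Hinc 1 i ltac:(lia) ltac:(lia) ltac:(lia)). lra. }
  assert (Hb1 : 0 < ln (a 1%nat)) by (rewrite <- ln_1; apply ln_increasing; lra).
  assert (Hbinc : forall i, (1 <= i < S n)%nat -> ln (a i) < ln (a (S i))).
  { intros i Hi. apply ln_increasing; [apply Hpos; lia | apply Hinc, Hi]. }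
  destruct (solS_infinite_dim n (fun i => ln (a i)) Hb1 Hbinc m) as [F [HF Hind]].
  exists (fun i x => F i (ln x)). split.
  - intros i Hi. apply solT_of_solS; auto.
  - apply lin_indep_comp_ln, Hind.
Qed.

Theorem mainTheorem5 (N : nat) (hN : (1 <= N)%nat) :
  (forall b : nat -> R,
     0 < b 1%nat ->
     (forall i, (1 <= i < N)%nat -> b i < b (S i)) ->
     is_subspace (solS N b) /\ infinite_dim_on (fun _ => True) (solS N b)) /\
  (forall a : nat -> R,
     1 < a 1%nat ->
     (forall i, (1 <= i < N)%nat -> a i < a (S i)) ->
     is_subspace (solT N a) /\ infinite_dim_on (fun x => 0 < x) (solT N a)).
Proof.
  destruct N as [|n]; [lia|]. split.
  - intros b Hb1 Hinc. split; [apply solS_subspace | apply solS_infinite_dim; auto].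
  - intros a Ha1 Hinc. split; [apply solT_subspace | apply solT_infinite_dim; auto].
Qed.
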